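(* For every positive integer $n$, the order supergraph $\mathcal{S}(S_n)$ of the symmetric group $S_n$ is cyclically separable if and only if $n \geq 4$.
   Context: All graphs are simple and undirected. For a finite group $G$, the order supergraph $\mathcal{S}(G)$ is the graph with vertex set $G$ in which two distinct vertices $x,y$ are adjacent if and only if the order of $x$ divides the order of $y$ or the order of $y$ divides the order of $x$. For a graph $\Gamma$, a vertex cutset is a set $S$ of vertices such that $\Gamma - S$ is disconnected; a cyclic vertex cutset is a vertex cutset $S$ such that $\Gamma - S$ has at least two connected components each of which contains a cycle. $\Gamma$ is called cyclically separable if it has a cyclic vertex cutset. *)

From mathcomp Require Import all_boot all_fingroup.
Set Implicit Arguments. Unset Strict Implicit. Unset Printing Implicit Defensive.

(* A simple undirected graph on a finite type T is given by a symmetric,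
   irreflexive relation e : rel T. *)

Definition order_supergraph (gT : finGroupType) : rel gT :=
  fun x y => (x != y) && ((#[x]%g %| #[y]%g) || (#[y]%g %| #[x]%g)).

Definition delete_vertices (T : finType) (e : rel T) (S : {set T}) : rel T :=
  fun x y => [&& x \notin S, y \notin S & e x y].

Definition component (T : finType) (r : rel T) (x : T) : {set T} :=
  [set y | connect r x y].

Definition contains_cycle (T : finType) (r : rel T) (C : {set T}) : Prop :=
  exists c : seq T, [/\ 3 <= size c, path.cycle r c, uniq c & {subset c <= C}].

Definition vertex_cutset (T : finType) (e : rel T) (S : {set T}) : Prop :=
  exists x y, [/\ x \notin S, y \notin S & ~~ connect (delete_vertices e S) x y].

Definition cyclic_vertex_cutset (T : finType) (e : rel T) (S : {set T}) : Prop :=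
  vertex_cutset e S /\
  exists x y, [/\ x \notin S, y \notin S,
    ~~ connect (delete_vertices e S) x y,
    contains_cycle (delete_vertices e S) (component (delete_vertices e S) x) &
    contains_cycle (delete_vertices e S) (component (delete_vertices e S) y)].

Definition cyclically_separable (T : finType) (e : rel T) : Prop :=
  exists S : {set T}, cyclic_vertex_cutset e S.

(* The identity is adjacent to every other vertex of the order supergraph,
   so it lies in every vertex cutset; two disjoint cycles in the remaining
   non-identity elements need six of them, which rules out n <= 3 since
   |S_3| = 6.  Conversely, for n >= 4 delete every element whose order is
   neither 2 nor 3: elements of order 2 and of order 3 are never adjacent,
   and three transpositions, resp. three 3-cycles, on four points form two
   triangles in different components. *)

From mathcomp Require Import all_boot all_fingroup cyclic.

Set Implicit Arguments. Unset Strict Implicit. Unset Printing Implicit Defensive.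

Section DeleteVertices.
Variables (T : finType) (e : rel T).

Lemma delete_vertices_sym (S : {set T}) :
  symmetric e -> symmetric (delete_vertices e S).
Proof. by move=> sym_e x y; rewrite /delete_vertices sym_e andbCA. Qed.

Lemma connect_delete_vertices_notin (S : {set T}) x y :
  connect (delete_vertices e S) x y -> x \notin S -> y \notin S.
Proof.
have cl : closed (delete_vertices e S) (~: S).
  by move=> u v /and3P [uS vS _]; rewrite !inE uS vS.
by move/(closed_connect cl); rewrite !inE => ->.
Qed.

Lemma universal_in_vertex_cutset (S : {set T}) u :
  symmetric e -> (forall v, v != u -> e u v) -> vertex_cutset e S -> u \in S.
Proof.
move=> sym_e univ [x [y [xS yS]]]; apply: contraNT => uS.
set r := delete_vertices e S.
have conn_u v : v \notin S -> connect r u v.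
  move=> vS; have [-> // | vu] := eqVneq v u.
  by apply: connect1; rewrite /r /delete_vertices uS vS univ.
have sym_r : connect_sym r by apply/sym_connect_sym/delete_vertices_sym.
by rewrite (connect_trans _ (conn_u y yS)) // sym_r conn_u.
Qed.

Lemma cyclic_vertex_cutset_card (S : {set T}) :
  symmetric e -> cyclic_vertex_cutset e S -> 6 <= #|~: S|.
Proof.
move=> sym_e [_ [x [y [xS yS nxy [c1 [size1 _ uniq1 sub1]] [c2 [size2 _ uniq2 sub2]]]]]].
set r := delete_vertices e S in nxy sub1 sub2.
have sym_r : connect_sym r by apply/sym_connect_sym/delete_vertices_sym.
have disjoint12 : uniq (c1 ++ c2).
  rewrite cat_uniq uniq1 uniq2 andbT; apply/hasPn => z /sub2; rewrite inE => yz.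
  apply/negP => /sub1; rewrite inE => xz.
  by move: nxy; rewrite (connect_trans xz) // sym_r.
have subC : (c1 ++ c2) \subset ~: S.
  apply/subsetP => z; rewrite mem_cat inE.
  by case/orP => [/sub1 | /sub2]; rewrite inE => /connect_delete_vertices_notin; apply.
rewrite (leq_trans _ (subset_leq_card subC)) //.
by rewrite (card_uniqP disjoint12) size_cat (leq_add size1 size2).
Qed.

Lemma contains_cycle_triangle (r : rel T) x y z :
  irreflexive r -> r x y -> r y z -> r z x -> contains_cycle r (component r x).
Proof.
move=> irr_r rxy ryz rzx.
have neq u v : r u v -> u != v by apply: contraTneq => ->; rewrite irr_r.
exists [:: x; y; z]; split => //=; first by rewrite rxy ryz rzx.
  by rewrite !inE negb_or neq // eq_sym neq // neq.
move=> w; rewrite !inE => /or3P [] /eqP ->; first exact: connect0.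
  exact: connect1.
exact: connect_trans (connect1 rxy) (connect1 ryz).
Qed.

End DeleteVertices.

Section OrderSupergraph.
Variable gT : finGroupType.
Local Notation supergraph := (@order_supergraph gT).

Lemma order_supergraph_sym : symmetric supergraph.
Proof. by move=> x y; rewrite /order_supergraph eq_sym orbC. Qed.

Lemma order_supergraph_irr : irreflexive supergraph.
Proof. by move=> x; rewrite /order_supergraph eqxx. Qed.

Lemma order_supergraph_same_order (x y : gT) :
  x != y -> #[x]%g = #[y]%g -> supergraph x y.
Proof. by move=> nxy oxy; rewrite /order_supergraph nxy oxy dvdnn. Qed.

Lemma order_supergraph_card : cyclically_separable supergraph -> 7 <= #|gT|.
Proof.
move=> [C cutC]; have [vcut _] := cutC.
have oneC : 1%g \in C.
  apply: universal_in_vertex_cutset order_supergraph_sym _ vcut => v v1.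
  by rewrite /order_supergraph eq_sym v1 order1 dvd1n.
rewrite -(cardsC C) -[7]/(1 + 6) leq_add //; first by apply/card_gt0P; exists 1%g.
exact: cyclic_vertex_cutset_card order_supergraph_sym cutC.
Qed.

Lemma order_supergraph_separable (p q : nat) (x1 x2 x3 y1 y2 y3 : gT) :
  prime p -> prime q -> p != q ->
  #[x1]%g = p -> #[x2]%g = p -> #[x3]%g = p ->
  #[y1]%g = q -> #[y2]%g = q -> #[y3]%g = q ->
  [&& x1 != x2, x2 != x3 & x3 != x1] -> [&& y1 != y2, y2 != y3 & y3 != y1] ->
  cyclically_separable supergraph.
Proof.
move=> p_pr q_pr pq ox1 ox2 ox3 oy1 oy2 oy3.
move=> /and3P [x12 x23 x31] /and3P [y12 y23 y31].
pose C := [set z : gT | #[z]%g \notin [:: p; q]].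
pose r := delete_vertices supergraph C.
have r_same u v : r u v -> #[u]%g = #[v]%g.
  rewrite /r /delete_vertices !inE !negbK /order_supergraph.
  case/and3P => /orP [] /eqP -> /orP [] /eqP -> /andP [_];
    by rewrite ?dvdn_prime2 // ?(eq_sym q) (negPf pq) => //= /eqP.
have r_of u v : u != v -> #[u]%g = #[v]%g -> #[u]%g \in [:: p; q] -> r u v.
  move=> nuv ouv ou; rewrite /r /delete_vertices !in_set !negbK -ouv ou.
  exact: order_supergraph_same_order.
have irr_r : irreflexive r.
  by move=> z; rewrite /r /delete_vertices order_supergraph_irr !andbF.
have cl : closed r [pred z | #[z]%g == p] by move=> u v /r_same ouv; rewrite !inE ouv.
have nxy : ~~ connect r x1 y1.
  by apply/negP => /(closed_connect cl); rewrite !inE ox1 oy1 eqxx eq_sym (negPf pq).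
have inCx : x1 \notin C by rewrite inE ox1 !inE eqxx.
have inCy : y1 \notin C by rewrite inE oy1 !inE eqxx orbT.
exists C; split; first by exists x1, y1.
exists x1, y1; split => //.
  apply: (contains_cycle_triangle (y := x2) (z := x3)) irr_r _ _ _;
    by apply: r_of; rewrite ?ox1 ?ox2 ?ox3 ?inE ?eqxx.
apply: (contains_cycle_triangle (y := y2) (z := y3)) irr_r _ _ _;
  by apply: r_of; rewrite ?oy1 ?oy2 ?oy3 ?inE ?eqxx ?orbT.
Qed.

End OrderSupergraph.

Lemma order_prime (gT : finGroupType) (x : gT) (p : nat) :
  prime p -> (x ^+ p = 1 -> x != 1 -> #[x] = p)%g.
Proof.
move=> p_pr xp x1; apply/prime_nt_dvdP; rewrite ?order_eq1 //.
by rewrite order_dvdn xp.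
Qed.

Section SmallPermutations.
Variable T : finType.
Implicit Types a b c d : T.

Lemma order_tperm a b : a != b -> #[tperm a b]%g = 2.
Proof.
move=> ab; apply: order_prime => //; first by rewrite expgS expg1 tperm2.
by apply: contra ab => /eqP/permP/(_ a); rewrite tpermL perm1 => ->.
Qed.

Definition cycle3 a b c : {perm T} := (tperm a b * tperm a c)%g.

Section Cycle3.
Variables (a b c : T).
Hypotheses (ab : a != b) (ac : a != c) (bc : b != c).

Lemma cycle3_a : cycle3 a b c a = b.
Proof. by rewrite permM tpermL tpermD // eq_sym. Qed.

Lemma cycle3_b : cycle3 a b c b = c.
Proof. by rewrite permM tpermR tpermL. Qed.

Lemma cycle3_c : cycle3 a b c c = a.
Proof. by rewrite permM (tpermD ac bc) tpermR. Qed.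

Lemma cycle3_fix i : i != a -> i != b -> i != c -> cycle3 a b c i = i.
Proof. by move=> ia ib ic; rewrite permM !tpermD // eq_sym. Qed.

Lemma order_cycle3 : #[cycle3 a b c]%g = 3.
Proof.
apply: order_prime => //; last first.
  by apply: contra ab => /eqP/permP/(_ a); rewrite cycle3_a perm1 => ->.
apply/permP => i; rewrite permX perm1 /=.
have [-> | ia] := eqVneq i a; first by rewrite cycle3_a cycle3_b cycle3_c.
have [-> | ib] := eqVneq i b; first by rewrite cycle3_b cycle3_c cycle3_a.
have [-> | ic] := eqVneq i c; first by rewrite cycle3_c cycle3_a cycle3_b.
by rewrite !cycle3_fix.
Qed.

End Cycle3.

Lemma perm_order_supergraph_separable a b c d :
  a != b -> a != c -> a != d -> b != c -> b != d -> c != d ->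
  cyclically_separable (@order_supergraph {perm T}).
Proof.
move=> ab ac ad bc bd cd.
have diff_at (s t : {perm T}) i : s i != t i -> s != t by apply: contra => /eqP ->.
apply: (order_supergraph_separable _ _ _
  (order_tperm ab) (order_tperm ac) (order_tperm ad)
  (order_cycle3 ab ac bc) (order_cycle3 ab ad bd) (order_cycle3 ac ad cd)) => //.
  by rewrite !(diff_at _ _ a) // !tpermL // eq_sym.
rewrite (diff_at _ _ b) ?cycle3_b // !(diff_at _ _ a) ?cycle3_a //.
by rewrite eq_sym.
Qed.

End SmallPermutations.

Theorem mainTheorem6 (n : nat) (hn : 0 < n) :
  cyclically_separable (@order_supergraph {perm 'I_n}) <-> 4 <= n.
Proof.
split => [/order_supergraph_card | n4].
  rewrite card_Sn; apply: contraTT; rewrite -ltnNge.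
  by case: n {hn} => [|[|[|[|]]]].
have [o0 o1 o2 o3] : [/\ 0 < n, 1 < n, 2 < n & 3 < n] by rewrite !(leq_trans _ n4).
exact: (@perm_order_supergraph_separable _
  (Ordinal o0) (Ordinal o1) (Ordinal o2) (Ordinal o3)).
Qed.
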